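(* Let $\langle A,\to\rangle$ be a conditional algebra that also satisfies $(a\to c)\wedge(b\to c)\le(a\vee b)\to c$ for all $a,b,c$. Let $F,H$ be filters of $A$ with $F\neq A$, and let $u$ be an ultrafilter. If $D^{\to}_H(F)\subseteq u$, then there exists an ultrafilter $v$ with $F\subseteq v$ and $D^{\to}_H(v)\subseteq u$.
   Context: A conditional algebra is $\langle A,\to\rangle$ with $A$ a Boolean algebra and $\to$ binary with $a\to1=1$, $(a\to b)\wedge(a\to c)=a\to(b\wedge c)$, $(a\vee b)\to c\le(a\to c)\wedge(b\to c)$. Filters include the improper filter $A$. For $X,Y\subseteq A$, $D^{\to}_X(Y)=\{b\in A:\exists a\in Y,\ a\to b\in X\}$. *)

From HB Require Import structures.
From mathcomp Require Import all_boot all_order.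
Set Implicit Arguments. Unset Strict Implicit. Unset Printing Implicit Defensive.
Import Order.Theory.
Local Open Scope order_scope.

(* A Boolean algebra is a complemented distributive lattice with top and
   bottom: MathComp's [ctbDistrLatticeType d].  Subsets of A are [T -> Prop]. *)

Section Cond.
Context {d : Order.disp_t} {T : ctbDistrLatticeType d}.

Definition conditional_algebra (imp : T -> T -> T) : Prop :=
  [/\ (forall a, imp a \top = \top),
      (forall a b c, imp a b `&` imp a c = imp a (b `&` c)) &
      (forall a b c, imp (a `|` b) c <= imp a c `&` imp b c)].

(* filters (the improper filter [fun _ => True] is allowed) *)
Definition is_filter (F : T -> Prop) : Prop :=
  [/\ F \top,
      (forall a b, F a -> a <= b -> F b) &
      (forall a b, F a -> F b -> F (a `&` b))].

Definition proper_filter (F : T -> Prop) : Prop :=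
  is_filter F /\ exists a, ~ F a.

Definition ultrafilter (U : T -> Prop) : Prop :=
  proper_filter U /\
  forall G : T -> Prop, proper_filter G -> (forall a, U a -> G a) ->
    forall a, G a -> U a.

Definition Dimp (imp : T -> T -> T) (X Y : T -> Prop) : T -> Prop :=
  fun b => exists a, Y a /\ X (imp a b).

End Cond.

From HB Require Import structures.
From mathcomp Require Import all_boot all_order.
From mathcomp Require Import classical_sets.
From Stdlib Require Import Classical_Prop.
Set Implicit Arguments. Unset Strict Implicit. Unset Printing Implicit Defensive.
Import Order.Theory.
Local Open Scope order_scope.

(* The elements [a] for which some [a -> b] in [H] has [b] outside [u],
   together with [\bot], form an ideal [J]: closure under joins is where the
   extra axiom [(a -> c) /\ (b -> c) <= (a \/ b) -> c] and the primality of
   [u] enter.  As [F] is proper, the hypothesis says exactly that [F] misses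
   [J], so the Boolean prime ideal theorem yields an ultrafilter [v] containing
   [F] and missing [J], which says exactly that [D_H(v)] is contained in [u]. *)

Section Filters.
Context {d : Order.disp_t} {T : ctbDistrLatticeType d}.
Implicit Types (G U : T -> Prop) (a b x : T).

Definition is_ideal (J : T -> Prop) : Prop :=
  [/\ J \bot,
      (forall a b, J b -> a <= b -> J a) &
      (forall a b, J a -> J b -> J (a `|` b))].

Lemma filter_bot G : is_filter G -> G \bot -> forall a, G a.
Proof. by case=> _ Gup _ Gbot a; apply: Gup Gbot _; rewrite le0x. Qed.

Lemma filter_compl G x : is_filter G -> G x -> G (~` x) -> forall a, G a.
Proof.
move=> Gfil Gx Gcx; apply: filter_bot => //.
by case: Gfil => _ _ GI; rewrite -(meetxC x); apply: GI.
Qed.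

Definition filter_adjoin G x : T -> Prop := fun y => exists2 f, G f & f `&` x <= y.

Lemma filter_adjoin_filter G x : is_filter G -> is_filter (filter_adjoin G x).
Proof.
case=> Gtop _ GI; split.
- by exists \top; rewrite ?lex1.
- by move=> a b [f Gf fa] ab; exists f => //; apply: le_trans fa ab.
- move=> a b [f Gf fa] [g Gg gb]; exists (f `&` g); first exact: GI.
  rewrite lexI (le_trans _ fa) ?(le_trans _ gb) //.
    by rewrite leI2 ?leIr.
  by rewrite leI2 ?leIl.
Qed.

Lemma filter_adjoin_sub G x a : G a -> filter_adjoin G x a.
Proof. by move=> Ga; exists a; rewrite ?leIl. Qed.

Lemma filter_adjoin_mem G x : is_filter G -> filter_adjoin G x x.
Proof. by case=> Gtop _ _; exists \top; rewrite ?leIr. Qed.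

Lemma ultrafilter_compl U x : ultrafilter U -> U x \/ U (~` x).
Proof.
move=> [[Ufil _] Umax].
have [[f Uf fx0]|nbot] := classic (filter_adjoin U x \bot).
  by right; case: Ufil => _ Uup _; apply: Uup Uf _; rewrite -disj_leC -lex0.
left; apply: (Umax (filter_adjoin U x)).
- by split; [exact: filter_adjoin_filter | exists \bot].
- exact: filter_adjoin_sub.
- exact: filter_adjoin_mem.
Qed.

Lemma ultrafilter_join U a b : ultrafilter U -> U (a `|` b) -> U a \/ U b.
Proof.
move=> Uult Uab; have [[Ufil [c nUc]] _] := Uult.
have [Ua|Uca] := ultrafilter_compl a Uult; first by left.
have [Ub|Ucb] := ultrafilter_compl b Uult; first by right.
exfalso; apply/nUc/(filter_compl Ufil Uab).
by rewrite complU; case: Ufil => _ _; apply.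
Qed.

Lemma complemented_filter_ultrafilter U :
  is_filter U -> ~ U \bot -> (forall x, U x \/ U (~` x)) -> ultrafilter U.
Proof.
move=> Ufil nUbot Ucompl; split; first by split => //; exists \bot.
move=> G [Gfil [c nGc]] UG a Ga.
have [//|Uca] := Ucompl a.
by exfalso; apply/nGc/(filter_compl Gfil Ga); apply: UG.
Qed.

Lemma bigcup_chain_filter (C : set (T -> Prop)) :
  (exists X, C X) -> total_on C subset -> (forall X, C X -> is_filter X) ->
  is_filter (\bigcup_(X in C) X)%classic.
Proof.
move=> [X0 CX0] Ctot Cfil; split.
- by exists X0 => //; case: (Cfil X0 CX0).
- move=> a b [X CX Xa] ab; exists X => //.
  by case: (Cfil X CX) => _ Xup _; apply: Xup Xa ab.
- move=> a b [X CX Xa] [Y CY Yb].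
  have [XY|YX] := Ctot X Y CX CY.
  + by exists Y => //; case: (Cfil Y CY) => _ _; apply => //; apply: XY.
  + by exists X => //; case: (Cfil X CX) => _ _; apply => //; apply: YX.
Qed.

Lemma meet_le_join_split a b x j k :
  a `&` x <= j -> b `&` ~` x <= k -> a `&` b <= j `|` k.
Proof.
move=> ax_j bcx_k; rewrite -[a `&` b]meetx1 -(joinxC x) meetUr.
apply: leU2; [apply: le_trans ax_j | apply: le_trans bcx_k].
  by rewrite leI2 ?leIl.
by rewrite leI2 ?leIr.
Qed.

Section Separation.
Variables (F J : T -> Prop).
Hypotheses (Ffil : is_filter F) (Jideal : is_ideal J)
  (FJ : forall a, F a -> ~ J a).

Definition separating G :=
  [/\ is_filter G, (forall a, F a -> G a) & (forall a, G a -> ~ J a)].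

(* The alternative [G = set0] only serves the empty chain in Zorn's lemma. *)
Lemma maximal_separating_exists : exists2 v, separating v &
  forall G, proper v G -> ~ separating G.
Proof.
pose P G := separating G \/ G = set0.
have [v [Pv vmax]] : exists v, P v /\ forall G, proper v G -> ~ P G.
  apply: Zorn_bigcup => C CP Ctot.
  have [[X0 [CX0 sepX0]]|nsep] := classic (exists X, C X /\ separating X); last first.
    right; apply/seteqP; split => // x [X CX Xx].
    case: (CP X CX) => [sepX|Xempty]; first by apply: nsep; exists X.
    by rewrite Xempty in Xx.
  have Csep X x : C X -> X x -> separating X.
    by move=> CX Xx; case: (CP X CX) => // Xempty; rewrite Xempty in Xx.
  have -> : (\bigcup_(X in C) X = \bigcup_(X in C `&` separating) X)%classic.
    apply/seteqP; split=> x [X CX Xx]; exists X => //; last by case: CX.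
    by split=> //; apply: Csep Xx.
  left; split.
  - apply: bigcup_chain_filter; first by exists X0.
      by move=> X Y [CX _] [CY _]; apply: Ctot.
    by move=> X [_ []].
  - by move=> a Fa; exists X0 => //; case: sepX0 => _ + _; apply.
  - by move=> a [X [_ [_ _ XJ]] Xa]; apply: XJ.
exists v => [|G vG sepG]; last by apply: (vmax G vG); left.
case: Pv => // v0; exfalso; apply: (vmax F); last by left.
rewrite v0; split => // /(_ \top); apply; by case: Ffil.
Qed.

Section Maximal.
Variable v : T -> Prop.
Hypotheses (vsep : separating v) (vmax : forall G, proper v G -> ~ separating G).

Lemma maximal_separating_adjoin y :
  ~ v y -> exists j f, [/\ J j, v f & f `&` y <= j].
Proof.
case: vsep => vfil Fv vJ nvy; apply: NNPP => nex.
apply: (@vmax (filter_adjoin v y)).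
- split; first by move=> a; apply: filter_adjoin_sub.
  by move=> /(_ y (filter_adjoin_mem y vfil)).
- split; [exact: filter_adjoin_filter | by move=> a /Fv/filter_adjoin_sub |].
  by move=> a [f vf fya] Ja; apply: nex; exists a, f.
Qed.

Lemma maximal_separating_compl x : v x \/ v (~` x).
Proof.
case: vsep => vfil _ vJ; apply: NNPP => /not_or_and[nvx nvcx].
have [j [f [Jj vf fxj]]] := maximal_separating_adjoin nvx.
have [k [g [Jk vg gcxk]]] := maximal_separating_adjoin nvcx.
case: Jideal => _ Jdown JU.
apply: (vJ (f `&` g)); first by case: vfil => _ _; apply.
exact: Jdown (JU _ _ Jj Jk) (meet_le_join_split fxj gcxk).
Qed.

End Maximal.

Theorem filter_ideal_separation :
  exists v, [/\ ultrafilter v, (forall a, F a -> v a) & (forall a, v a -> ~ J a)].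
Proof.
have [v vsep vmax] := maximal_separating_exists.
have [vfil Fv vJ] := vsep; exists v; split => //.
apply: complemented_filter_ultrafilter => //.
  by move=> vbot; apply: (vJ \bot vbot); case: Jideal.
exact: maximal_separating_compl.
Qed.

End Separation.

End Filters.

Section ConditionalAlgebra.
Context {d : Order.disp_t} {T : ctbDistrLatticeType d}.
Variable imp : T -> T -> T.
Hypothesis imp_cond : conditional_algebra imp.

Lemma imp_monotone_r a b c : b <= c -> imp a b <= imp a c.
Proof.
by case: imp_cond => _ impI _ bc; rewrite -(meet_l bc) -impI leIr.
Qed.

Lemma imp_antitone_l a a' b : a' <= a -> imp a b <= imp a' b.
Proof.
case: imp_cond => _ _ impU a'a; rewrite -(join_r a'a).
by apply: le_trans (impU _ _ _) _; rewrite leIl.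
Qed.

(* [\bot] is adjoined so that every filter missing this set is proper. *)
Definition Dimp_escape (H u : T -> Prop) : T -> Prop :=
  fun a => a = \bot \/ exists2 b, ~ u b & H (imp a b).

Lemma Dimp_escape_ideal H u :
  (forall a b c, imp a c `&` imp b c <= imp (a `|` b) c) ->
  is_filter H -> ultrafilter u -> is_ideal (Dimp_escape H u).
Proof.
move=> impU Hfil uult; case: Hfil => _ Hup HI; split; first by left.
- move=> a j [->|[b nub Hjb]] aj; first by left; apply/eqP; rewrite -lex0.
  by right; exists b => //; apply: Hup Hjb (imp_antitone_l _ aj).
- move=> a a' [->|[b nub Hab]]; first by rewrite join0x.
  move=> [->|[b' nub' Ha'b']]; first by rewrite joinx0; right; exists b.
  right; exists (b `|` b'); first by case/(ultrafilter_join uult).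
  apply: (Hup _ _ _ (impU _ _ _)); apply: HI.
  + by apply: (Hup _ _ Hab); rewrite imp_monotone_r ?leUl.
  + by apply: (Hup _ _ Ha'b'); rewrite imp_monotone_r ?leUr.
Qed.

Lemma Dimp_sub_iff_disjoint H u G : is_filter G -> (exists a, ~ G a) ->
  (forall b, Dimp imp H G b -> u b) <-> (forall a, G a -> ~ Dimp_escape H u a).
Proof.
move=> Gfil [c nGc]; split=> [DGu a Ga [a0|[b nub Hab]]|GJ b [a [Ga Hab]]].
- by apply/nGc/(filter_bot Gfil); rewrite -a0.
- by apply/nub/DGu; exists a.
- by apply: NNPP => nub; apply: (GJ a Ga); right; exists b.
Qed.

End ConditionalAlgebra.

Theorem lemma9p2 (d : Order.disp_t) (T : ctbDistrLatticeType d)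
    (imp : T -> T -> T)
    (Hca : conditional_algebra imp)
    (Hjoin : forall a b c : T, imp a c `&` imp b c <= imp (a `|` b) c)
    (F H u : T -> Prop)
    (HF : is_filter F) (HFne : exists a, ~ F a)
    (HH : is_filter H) (Hu : ultrafilter u)
    (Hsub : forall b, Dimp imp H F b -> u b) :
  exists v : T -> Prop, ultrafilter v /\ (forall a, F a -> v a) /\
    (forall b, Dimp imp H v b -> u b).
Proof.
have Jideal := Dimp_escape_ideal Hca Hjoin HH Hu.
have FJ := (Dimp_sub_iff_disjoint imp H u HF HFne).1 Hsub.
have [v [vult Fv vJ]] := filter_ideal_separation HF Jideal FJ.
exists v; do 2!split=> //.
by have [[vfil vproper] _] := vult; apply/(Dimp_sub_iff_disjoint imp H u vfil vproper).
Qed.
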